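(* Let $n\ge2$ and $d>2$. Let $S=\{\mathbf{m}\in T_{n,d}:\max(\mathbf{m})\ge d-1\}$ and let $A\subseteq\mathbb{N}^n$ be the semigroup generated by $S$. Then $\mathcal{A}_{n,d}\setminus A$ is finite. More precisely, if $\mathbf{e}\in\mathcal{A}_{n,d}$ satisfies $\max(\mathbf{e})\ge(n-1)(d^2-d)$, then $\mathbf{e}\in A$. Consequently, for any semigroup $B$ generated by a set $U$ with $S\subseteq U\subseteq T_{n,d}$, the set $\mathcal{A}_{n,d}\setminus B$ is finite.
   Context: For $\mathbf{a}\in\mathbb{N}^n$, $|\mathbf{a}|=\sum_i a_i$ and $\max(\mathbf{a})=\max_i a_i$. $T_{n,d}=\{\mathbf{a}\in\mathbb{N}^n:|\mathbf{a}|=d\}$ and $\mathcal{A}_{n,d}$ is the additive semigroup generated by $T_{n,d}$. *)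

From mathcomp Require Import all_boot.
Set Implicit Arguments. Unset Strict Implicit. Unset Printing Implicit Defensive.

Definition vec (n : nat) := {ffun 'I_n -> nat}.

Definition vsum n (a : vec n) : nat := \sum_(i < n) a i.
(* max(a) = largest coordinate (0 for n = 0) *)
Definition vmax n (a : vec n) : nat := \max_(i < n) a i.

Definition vzero n : vec n := [ffun => 0].
Definition vadd n (a b : vec n) : vec n := [ffun i => a i + b i].

Definition Tnd n d (a : vec n) : Prop := vsum a = d.

Inductive gen_semigroup n (U : vec n -> Prop) : vec n -> Prop :=
| gen_zero : gen_semigroup U (vzero n)
| gen_add u x : U u -> gen_semigroup U x -> gen_semigroup U (vadd u x).

Definition Aset n d := gen_semigroup (@Tnd n d).

Definition finite_diff n (X Y : vec n -> Prop) : Prop :=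
  exists s : seq (vec n), forall e, X e -> ~ Y e -> e \in s.

From mathcomp Require Import all_boot zify.
Set Implicit Arguments. Unset Strict Implicit. Unset Printing Implicit Defensive.

(* Fix a coordinate i0 where e is maximal.  Generators d*x_j (j != i0) first
   reduce every other coordinate below d; then the off-axis part has size at
   most (n-1)(d-1), and each of its units is removed together with d-1 units
   of the i0-th coordinate by a generator x_j + (d-1)x_{i0}.  The bound
   (n-1)(d^2-d) >= (n-1)(d-1)^2 guarantees that coordinate i0 never runs out;
   what remains is a multiple of d on the axis i0, a sum of copies of d*x_{i0}.
   Hence only vectors of bounded max can lie outside the semigroup. *)

Definition vsub n (a b : vec n) : vec n := [ffun i => a i - b i].
Definition vdelta n (i : 'I_n) c : vec n := [ffun k => if k == i then c else 0].

Definition Snd n d (m : vec n) : Prop := @Tnd n d m /\ d - 1 <= vmax m.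

Section Vectors.
Variable n : nat.
Implicit Types (a b e u : vec n) (i j : 'I_n).

Lemma vdeltaE i c k : vdelta i c k = if k == i then c else 0.
Proof. by rewrite ffunE. Qed.

Lemma vdelta0 i : vdelta i 0 = vzero n.
Proof. by apply/ffunP=> k; rewrite !ffunE if_same. Qed.

Lemma vdeltaD i c1 c2 : vdelta i (c1 + c2) = vadd (vdelta i c1) (vdelta i c2).
Proof. by apply/ffunP=> k; rewrite !ffunE; case: ifP. Qed.

Lemma vadd_subK u e : (forall i, u i <= e i) -> vadd u (vsub e u) = e.
Proof. by move=> le_ue; apply/ffunP=> i; rewrite !ffunE subnKC. Qed.

Lemma vsum_add a b : vsum (vadd a b) = vsum a + vsum b.
Proof. by rewrite /vsum -big_split; apply: eq_bigr => i _; rewrite ffunE. Qed.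

Lemma vsum_sub u e : (forall i, u i <= e i) -> vsum (vsub e u) = vsum e - vsum u.
Proof. by move=> le_ue; rewrite -{2}(vadd_subK le_ue) vsum_add addKn. Qed.

Lemma vsumD1 e i : vsum e = e i + \sum_(k | k != i) e k.
Proof. by rewrite /vsum (bigD1 i). Qed.

Lemma leq_coord_vsum e i : e i <= vsum e.
Proof. by rewrite (vsumD1 e i) leq_addr. Qed.

Lemma leq_coord_vmax e i : e i <= vmax e.
Proof. exact: leq_bigmax. Qed.

Lemma vsum_vdelta i c : vsum (vdelta i c) = c.
Proof.
rewrite (vsumD1 _ i) vdeltaE eqxx big1 ?addn0 // => k /negbTE.
by rewrite vdeltaE => ->.
Qed.

Lemma vmax_vdelta i c : c <= vmax (vdelta i c).
Proof. by apply: leq_trans (leq_coord_vmax _ i); rewrite vdeltaE eqxx. Qed.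

Lemma vsum_eq_coord e i : vsum e = e i -> e = vdelta i (e i).
Proof.
move=> /eqP; rewrite (vsumD1 e i) -{2}[e i]addn0 eqn_add2l sum_nat_eq0.
move=> /forall_inP off0; apply/ffunP=> k; rewrite vdeltaE.
by case: eqP => [-> // | /eqP ki]; apply/eqP; exact: off0.
Qed.

Lemma off_axis_pos e i : e i < vsum e -> exists2 j, j != i & 0 < e j.
Proof.
rewrite (vsumD1 e i) -{1}[e i]addn0 ltn_add2l lt0n sum_nat_eq0.
by move=> /forall_inPn[j ji ej]; exists j; rewrite // lt0n.
Qed.

End Vectors.

Section Semigroup.
Variable n : nat.
Implicit Types (S U : vec n -> Prop) (e u : vec n).

Lemma gen_semigroup_mono S U e :
  (forall m, S m -> U m) -> gen_semigroup S e -> gen_semigroup U e.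
Proof. by move=> SU; elim=> [|u x Su _ IH]; constructor; auto. Qed.

Lemma gen_semigroup_subr S u e : S u -> (forall i, u i <= e i) ->
  gen_semigroup S (vsub e u) -> gen_semigroup S e.
Proof. by move=> Su le_ue rest; rewrite -(vadd_subK le_ue); constructor. Qed.

Lemma Aset_dvdn d e : @Aset n d e -> d %| vsum e.
Proof.
elim=> [|u x Tu _ IH]; last by rewrite vsum_add Tu dvdn_add.
by rewrite /vsum big1 // => i _; rewrite ffunE.
Qed.

Lemma finite_diff_vmax_bounded (X Y : vec n -> Prop) M :
  (forall e, X e -> ~ Y e -> vmax e <= M) -> finite_diff X Y.
Proof.
move=> bounded.
exists [seq [ffun i => val (f i)] : vec n | f : {ffun 'I_n -> 'I_M.+1} <- enum {ffun 'I_n -> 'I_M.+1}].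
move=> e Xe notYe; apply/mapP; exists [ffun i => inord (e i)]; first exact: mem_enum.
apply/ffunP=> i; rewrite !ffunE /= inordK // ltnS.
exact: leq_trans (leq_coord_vmax e i) (bounded e Xe notYe).
Qed.

End Semigroup.

Section NearPureGenerators.
Variables n d : nat.
Hypothesis d_gt0 : 0 < d.
Local Notation S := (@Snd n d).
Implicit Types (e : vec n) (i j : 'I_n).

Lemma Snd_vdelta i : S (vdelta i d).
Proof. by split; [exact: vsum_vdelta | apply: leq_trans (vmax_vdelta i d); lia]. Qed.

Lemma Snd_vdelta_mix i j : j != i -> S (vadd (vdelta j 1) (vdelta i (d - 1))).
Proof.
move=> ji; split; first by rewrite /Tnd vsum_add !vsum_vdelta; lia.
apply: leq_trans (leq_coord_vmax _ i).
by rewrite ffunE !vdeltaE eqxx eq_sym (negbTE ji).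
Qed.

Lemma gen_Snd_axis i c : d %| c -> gen_semigroup S (vdelta i c).
Proof.
move=> /dvdnP[k ->]; elim: k => [|k IH]; first by rewrite vdelta0; constructor.
by rewrite mulSn vdeltaD; constructor; first exact: Snd_vdelta.
Qed.

Lemma gen_Snd_small_off_axis i e :
  d %| vsum e -> (d - 1) * (vsum e - e i) <= e i -> gen_semigroup S e.
Proof.
have [k] := ubnP (vsum e - e i); elim: k e => // k IH e off_lt dvd_e bound_e.
have [off0 | off_pos] := leqP (vsum e) (e i).
  have sum_ei : vsum e = e i by apply/eqP; rewrite eqn_leq off0 leq_coord_vsum.
  by rewrite (vsum_eq_coord sum_ei); apply: gen_Snd_axis; rewrite -sum_ei.
have [j ji ej] := off_axis_pos off_pos.
have ei_ge : d - 1 <= e i by apply: leq_trans bound_e; rewrite leq_pmulr ?subn_gt0.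
set u := vadd (vdelta j 1) (vdelta i (d - 1)).
have uE l : u l = (l == j) + (if l == i then d - 1 else 0) by rewrite ffunE !vdeltaE.
have le_ue l : u l <= e l.
  by rewrite uE; case: eqP => [-> | _]; [rewrite (negbTE ji) | case: eqP => [-> | _]].
have sum_u : vsum u = d by rewrite vsum_add !vsum_vdelta; lia.
have ui : u i = d - 1 by rewrite uE eqxx eq_sym (negbTE ji).
apply: (gen_semigroup_subr (Snd_vdelta_mix ji) le_ue).
have ei' : vsub e u i = e i - (d - 1) by rewrite ffunE ui.
have ei_le := leq_coord_vsum e i.
apply: IH; rewrite ?vsum_sub // ?sum_u ?ei' ?dvdn_sub //; first lia.
have -> : vsum e - d - (e i - (d - 1)) = vsum e - e i - 1 by lia.
by rewrite mulnBr muln1 leq_sub2r.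
Qed.

Lemma gen_Snd_large_coord i e :
  d %| vsum e -> (n - 1) * (d - 1) * (d - 1) <= e i -> gen_semigroup S e.
Proof.
have [k] := ubnP (vsum e); elim: k e => // k IH e sum_lt dvd_e large_ei.
case: (pickP (fun j => (j != i) && (d <= e j))) => [j /andP[ji ej] | small].
  have le_de l : vdelta j d l <= e l.
    by rewrite vdeltaE; case: eqP => [-> |].
  apply: (gen_semigroup_subr (Snd_vdelta j) le_de).
  have ej_le := leq_coord_vsum e j.
  apply: IH; rewrite ?vsum_sub // ?vsum_vdelta ?dvdn_sub //; first lia.
  by rewrite ffunE vdeltaE eq_sym (negbTE ji) subn0.
apply: (gen_Snd_small_off_axis dvd_e); apply: leq_trans large_ei.
rewrite mulnC leq_mul2r (vsumD1 e i) addKn; apply/orP; right.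
have -> : (n - 1) * (d - 1) = \sum_(j | j != i) (d - 1).
  by rewrite sum_nat_const cardC1 card_ord subn1.
by apply: leq_sum => j ji; move: (small j); rewrite /= ji /=; lia.
Qed.

Lemma gen_Snd_large_vmax e : 0 < n ->
  @Aset n d e -> (n - 1) * (d ^ 2 - d) <= vmax e -> gen_semigroup S e.
Proof.
move=> n_gt0 Ae large.
have [i vmax_ei] : {i | vmax e = e i} by apply: eq_bigmax; rewrite card_ord.
apply: (gen_Snd_large_coord (i := i) (Aset_dvdn Ae)); rewrite -vmax_ei.
apply: leq_trans large; have -> : d ^ 2 - d = d * (d - 1) by rewrite mulnBr muln1.
by rewrite -mulnA leq_mul2l leq_mul2r leq_subr !orbT.
Qed.

End NearPureGenerators.

Theorem lemma5p1 (n d : nat) : 2 <= n -> 2 < d ->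
  let S := fun m : vec n => @Tnd n d m /\ d - 1 <= vmax m in
  finite_diff (@Aset n d) (gen_semigroup S) /\
  (forall e : vec n, @Aset n d e -> (n - 1) * (d ^ 2 - d) <= vmax e ->
     gen_semigroup S e) /\
  (forall U : vec n -> Prop, (forall m, S m -> U m) -> (forall m, U m -> @Tnd n d m) ->
     finite_diff (@Aset n d) (gen_semigroup U)).
Proof.
move=> n_ge2 d_gt2 S.
have d_gt0 : 0 < d by lia.
have large_in_S e := @gen_Snd_large_vmax n d d_gt0 e (ltnW n_ge2).
have outside_bounded U : (forall m, S m -> U m) -> forall e,
    @Aset n d e -> ~ gen_semigroup U e -> vmax e <= (n - 1) * (d ^ 2 - d).
  move=> SU e Ae notUe; rewrite leqNgt; apply/negP => /ltnW large.
  exact/notUe/(gen_semigroup_mono SU)/large_in_S.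
split; first exact/finite_diff_vmax_bounded/outside_bounded.
split=> // U SU _; exact/finite_diff_vmax_bounded/outside_bounded.
Qed.
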